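(* Let $\chi=(X,\{e_i\},\{\gamma_i\},\{\varepsilon_i\})$ be a $\mathfrak g$-geometric crystal, let $f$ be an upper (resp. lower) half-decoration on $\chi$, and let $\theta:T'\to X$ be a positive structure for $(\chi,f)$. Let $(X_*(T')\cong\mathbb Z^{\dim T'},\{\tilde e_i\},\{{\rm wt}_i\},\{\tilde\varepsilon_i\})$ be the tropicalized (Langlands dual, ${}^L\mathfrak g$-) crystal, $\tilde f$ the tropicalization of $f\circ\theta$, and $\widetilde B_{\theta,f}:=\{\tilde x\in X_*(T')\mid \tilde f(\tilde x)\ge 0\}$, where $\tilde e_i^{\,n}(\tilde x)$ is declared to be $0$ whenever it does not lie in $\widetilde B_{\theta,f}$ (and $\tilde f_i=\tilde e_i^{-1}$). Then $\widetilde B_{\theta,f}$ with the restricted structure is an upper (resp. lower) normal crystal, i.e. for every $b\in\widetilde B_{\theta,f}$ and $i\in I$, $\tilde\varepsilon_i(b)=\max\{n\ge0\mid \tilde e_i^{\,n}b\in\widetilde B_{\theta,f}\}$ (resp. $\tilde\varphi_i(b)=\max\{n\ge0\mid \tilde f_i^{\,n}b\in\widetilde B_{\theta,f}\}$, where $\tilde\varphi_i=\tilde\varepsilon_i+{\rm wt}_i$).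
   Context: Setting: $\mathfrak g$ simple with Cartan matrix $A=(a_{ij})$, $a_{ij}=\alpha_j(h_i)$. A $\mathfrak g$-geometric crystal is $(X,\{e_i\}_{i\in I},\{\gamma_i\}_{i\in I},\{\varepsilon_i\}_{i\in I})$ where $X$ is an irreducible complex algebraic variety, $\gamma_i,\varepsilon_i$ are rational functions on $X$, and $e_i:\mathbb C^\times\times X\to X$, $(c,x)\mapsto e_i^c(x)$, are unital rational $\mathbb C^\times$-actions, such that $(\{1\}\times X)\cap{\rm dom}(e_i)$ is open dense in $\{1\}\times X$; $\gamma_j(e_i^c(x))=c^{a_{ij}}\gamma_j(x)$; the $e_i$ satisfy the Verma relations ($e_i^{c_1}e_j^{c_2}=e_j^{c_2}e_i^{c_1}$ if $a_{ij}=a_{ji}=0$; $e_i^{c_1}e_j^{c_1c_2}e_i^{c_2}=e_j^{c_2}e_i^{c_1c_2}e_j^{c_1}$ if $a_{ij}=a_{ji}=-1$; $e_i^{c_1}e_j^{c_1^2c_2}e_i^{c_1c_2}e_j^{c_2}=e_j^{c_2}e_i^{c_1c_2}e_j^{c_1^2c_2}e_i^{c_1}$ if $a_{ij}=-2,a_{ji}=-1$; $e_i^{c_1}e_j^{c_1^3c_2}e_i^{c_1^2c_2}e_j^{c_1^3c_2^2}e_i^{c_1c_2}e_j^{c_2}=e_j^{c_2}e_i^{c_1c_2}e_j^{c_1^3c_2^2}e_i^{c_1^2c_2}e_j^{c_1^3c_2}e_i^{c_1}$ if $a_{ij}=-3,a_{ji}=-1$); and $\varepsilon_i(e_i^c(x))=c^{-1}\varepsilon_i(x)$,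 $\varepsilon_i(e_j^c(x))=\varepsilon_i(x)$ if $a_{ij}=a_{ji}=0$. Put $\varphi_i:=\varepsilon_i\gamma_i$. A rational function $f$ on $X$ is an upper half-decoration if $f(e_i^c(x))=f(x)+(c^{-1}-1)\varepsilon_i(x)$, and a lower half-decoration if $f(e_i^c(x))=f(x)+(c-1)\varphi_i(x)$, for all $i,c,x$. A positive structure is a birational map $\theta:T'\to X$ from an algebraic torus $T'\cong(\mathbb C^\times)^m$ such that $\theta^{-1}\circ e_i\circ\theta:\mathbb C^\times\times T'\to T'$ and $\gamma_i\circ\theta,\varepsilon_i\circ\theta,f\circ\theta$ are positive rational maps (in the torus coordinates, ratios of polynomials with positive coefficients). Tropicalization of a positive rational function in coordinates $c_1,\dots,c_m$ (and $c$) is the piecewise-linear function on $\mathbb Z^m$ (and $\mathbb Z$) obtained by the valuation $\mathbb V(g)=-\deg g(x^{-1})$, i.e. replacing multiplication by $+$, division by $-$, addition by $\min$, positive constants by $0$, and $c_j$ by $x_j$. Thus $\tilde e_i^{\,n}$ ($n\in\mathbb Z$) is the tropicalization of $\theta^{-1}\circ e_i^c\circ\theta$, ${\rm wt}_i$ that of $\gamma_i\circ\theta$, $\tilde\varepsilon_i$ that of $\varepsilon_i\circ\theta$; $\tilde e_i=\tilde e_i^{\,1}$, $\tilde f_i=\tilde e_i^{\,-1}$. *)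

From Stdlib Require Import Reals ZArith Lia Lra.
Open Scope R_scope.

(** Index set I = {0,..,r-1}; A i j = a_ij = alpha_j(h_i). *)
Fixpoint sumR (n : nat) (f : nat -> R) : R :=
  match n with O => 0 | S k => sumR k f + f k end.

Definition simple_cartan (r : nat) (A : nat -> nat -> Z) : Prop :=
  (1 <= r)%nat /\
  (forall i, (i < r)%nat -> A i i = 2%Z) /\
  (forall i j, (i < r)%nat -> (j < r)%nat -> i <> j -> (A i j <= 0)%Z) /\
  (forall i j, (i < r)%nat -> (j < r)%nat -> (A i j = 0%Z <-> A j i = 0%Z)) /\
  (exists d : nat -> Z,
      (forall i, (i < r)%nat -> (0 < d i)%Z) /\
      (forall i j, (i < r)%nat -> (j < r)%nat -> (d i * A i j = d j * A j i)%Z) /\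
      (forall v : nat -> R, (exists i, (i < r)%nat /\ v i <> 0) ->
         0 < sumR r (fun i => sumR r (fun j => v i * IZR (d i * A i j) * v j)))) /\
  (forall S : nat -> bool,
      (exists i, (i < r)%nat /\ S i = true) ->
      (exists i, (i < r)%nat /\ S i = false) ->
      exists i j, (i < r)%nat /\ (j < r)%nat /\ S i = true /\ S j = false /\
                  A i j <> 0%Z).

(** * Subtraction-free (positive) rational expressions in the torus
    coordinates c_0..c_{m-1} (PVar j) and the extra parameter c (PC). *)
Inductive pexpr : Type :=
| PVar : nat -> pexpr
| PC : pexpr
| PConst : R -> pexpr
| PAdd : pexpr -> pexpr -> pexpr
| PMul : pexpr -> pexpr -> pexpr
| PDiv : pexpr -> pexpr -> pexpr.

Fixpoint wf (m : nat) (usec : bool) (e : pexpr) : Prop :=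
  match e with
  | PVar j => (j < m)%nat
  | PC => usec = true
  | PConst a => 0 < a
  | PAdd a b | PMul a b | PDiv a b => wf m usec a /\ wf m usec b
  end.

Fixpoint peval (e : pexpr) (x : nat -> R) (c : R) : R :=
  match e with
  | PVar j => x j
  | PC => c
  | PConst a => a
  | PAdd a b => peval a x c + peval b x c
  | PMul a b => peval a x c * peval b x c
  | PDiv a b => peval a x c / peval b x c
  end.

Fixpoint trop (e : pexpr) (b : nat -> Z) (n : Z) : Z :=
  match e with
  | PVar j => b j
  | PC => n
  | PConst _ => 0%Z
  | PAdd a1 a2 => Z.min (trop a1 b n) (trop a2 b n)
  | PMul a1 a2 => (trop a1 b n + trop a2 b n)%Z
  | PDiv a1 a2 => (trop a1 b n - trop a2 b n)%Z
  end.

Definition pos_pt (x : nat -> R) : Prop := forall j, 0 < x j.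
Definition pt_eq (m : nat) (x y : nat -> R) : Prop := forall j, (j < m)%nat -> x j = y j.

Definition act (E : nat -> nat -> pexpr) (i : nat) (c : R) (x : nat -> R) : nat -> R :=
  fun j => peval (E i j) x c.

(** A g-geometric crystal on the torus T' = (C^x)^m (i.e. transported via
    a positive structure theta), given by positive rational expressions:
    E i j = j-th coordinate of theta^-1 o e_i^c o theta, G i = gamma_i o theta,
    Eps i = eps_i o theta.  Identities of rational functions are checked on
    the positive real points, which is equivalent for subtraction-free
    expressions (Zariski density). *)
Definition pos_geom_crystal (r : nat) (A : nat -> nat -> Z) (m : nat)
  (E : nat -> nat -> pexpr) (G Eps : nat -> pexpr) : Prop :=
  (forall i j, (i < r)%nat -> (j < m)%nat -> wf m true (E i j)) /\
  (forall i, (i < r)%nat -> wf m false (G i) /\ wf m false (Eps i)) /\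
  (forall i x, (i < r)%nat -> pos_pt x -> pt_eq m (act E i 1 x) x) /\
  (forall i c1 c2 x, (i < r)%nat -> 0 < c1 -> 0 < c2 -> pos_pt x ->
     pt_eq m (act E i c1 (act E i c2 x)) (act E i (c1 * c2) x)) /\
  (forall i j c x, (i < r)%nat -> (j < r)%nat -> 0 < c -> pos_pt x ->
     peval (G j) (act E i c x) 1 = powerRZ c (A i j) * peval (G j) x 1) /\
  (forall i j c1 c2 x, (i < r)%nat -> (j < r)%nat -> 0 < c1 -> 0 < c2 -> pos_pt x ->
     A i j = 0%Z -> A j i = 0%Z ->
     pt_eq m (act E i c1 (act E j c2 x)) (act E j c2 (act E i c1 x))) /\
  (forall i j c1 c2 x, (i < r)%nat -> (j < r)%nat -> 0 < c1 -> 0 < c2 -> pos_pt x ->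
     A i j = (-1)%Z -> A j i = (-1)%Z ->
     pt_eq m (act E i c1 (act E j (c1 * c2) (act E i c2 x)))
             (act E j c2 (act E i (c1 * c2) (act E j c1 x)))) /\
  (forall i j c1 c2 x, (i < r)%nat -> (j < r)%nat -> 0 < c1 -> 0 < c2 -> pos_pt x ->
     A i j = (-2)%Z -> A j i = (-1)%Z ->
     pt_eq m (act E i c1 (act E j (c1 ^ 2 * c2) (act E i (c1 * c2) (act E j c2 x))))
             (act E j c2 (act E i (c1 * c2) (act E j (c1 ^ 2 * c2) (act E i c1 x))))) /\
  (forall i j c1 c2 x, (i < r)%nat -> (j < r)%nat -> 0 < c1 -> 0 < c2 -> pos_pt x ->
     A i j = (-3)%Z -> A j i = (-1)%Z ->
     pt_eq m (act E i c1 (act E j (c1 ^ 3 * c2) (act E i (c1 ^ 2 * c2)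
               (act E j (c1 ^ 3 * c2 ^ 2) (act E i (c1 * c2) (act E j c2 x))))))
             (act E j c2 (act E i (c1 * c2) (act E j (c1 ^ 3 * c2 ^ 2)
               (act E i (c1 ^ 2 * c2) (act E j (c1 ^ 3 * c2) (act E i c1 x))))))) /\
  (forall i c x, (i < r)%nat -> 0 < c -> pos_pt x ->
     peval (Eps i) (act E i c x) 1 = / c * peval (Eps i) x 1) /\
  (forall i j c x, (i < r)%nat -> (j < r)%nat -> 0 < c -> pos_pt x ->
     A i j = 0%Z -> A j i = 0%Z ->
     peval (Eps i) (act E j c x) 1 = peval (Eps i) x 1).

(** upper / lower half-decorations (f o theta given by the positive
    expression F) *)
Definition upper_half_decoration (r m : nat) (E : nat -> nat -> pexpr)
  (Eps : nat -> pexpr) (F : pexpr) : Prop :=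
  forall i c x, (i < r)%nat -> 0 < c -> pos_pt x ->
    peval F (act E i c x) 1 = peval F x 1 + (/ c - 1) * peval (Eps i) x 1.

Definition lower_half_decoration (r m : nat) (E : nat -> nat -> pexpr)
  (G Eps : nat -> pexpr) (F : pexpr) : Prop :=
  forall i c x, (i < r)%nat -> 0 < c -> pos_pt x ->
    peval F (act E i c x) 1
    = peval F x 1 + (c - 1) * (peval (Eps i) x 1 * peval (G i) x 1).

(** tropicalized crystal on X_*(T') = Z^m (coordinates j < m of b) *)
Definition tact (E : nat -> nat -> pexpr) (i : nat) (n : Z) (b : nat -> Z) : nat -> Z :=
  fun j => trop (E i j) b n.

Definition inB (F : pexpr) (b : nat -> Z) : Prop := (0 <= trop F b 0)%Z.

Definition is_maxZ (P : Z -> Prop) (k : Z) : Prop :=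
  P k /\ forall n, P n -> (n <= k)%Z.

From Stdlib Require Import Reals ZArith Lia Lra.
Open Scope R_scope.

(* Evaluating a subtraction-free expression at x_j = t^(b_j), c = t^n gives a
   function of exact order t^(trop e b n) as t -> 0+, so subtraction-free
   expressions that agree as functions have the same tropicalization.
   Tropicalizing the upper decoration identity
     f(e_i^c x) + eps_i(x) = f(x) + c^-1 eps_i(x)
   gives min(f~(e~_i^n b), eps~_i(b)) = min(f~(b), eps~_i(b) - n), and when
   f~(b) >= 0 this says exactly that eps~_i(b) is the largest n >= 0 with
   f~(e~_i^n b) >= 0.  The lower case is the same with phi_i = eps_i gamma_i
   and c in place of eps_i and c^-1. *)

Lemma powerRZ_antitone t k k' :
  0 < t <= 1 -> (k <= k')%Z -> powerRZ t k' <= powerRZ t k.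
Proof.
  intros Ht Hk.
  replace k' with (k + Z.of_nat (Z.to_nat (k' - k)))%Z by lia.
  rewrite powerRZ_add, <- pow_powerRZ by lra.
  assert (0 < powerRZ t k) by (apply powerRZ_lt; lra).
  assert (0 <= t ^ Z.to_nat (k' - k)) by (apply pow_le; lra).
  assert (t ^ Z.to_nat (k' - k) <= 1).
  { rewrite <- (pow1 (Z.to_nat (k' - k))). apply pow_incr; lra. }
  nra.
Qed.

Definition asymp_order (g : R -> R) (k : Z) : Prop :=
  exists L U, 0 < L /\ 0 < U /\
    forall t, 0 < t <= 1 -> L * powerRZ t k <= g t <= U * powerRZ t k.

Lemma asymp_order_const a : 0 < a -> asymp_order (fun _ => a) 0.
Proof.
  intros Ha. exists a, a. split; [lra|split; [lra|]].
  intros t _. simpl. lra.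
Qed.

Lemma asymp_order_powerRZ k : asymp_order (fun t => powerRZ t k) k.
Proof. exists 1, 1. split; [lra|split; [lra|]]. intros t _. lra. Qed.

Lemma asymp_order_ext g1 g2 k :
  (forall t, 0 < t <= 1 -> g1 t = g2 t) ->
  asymp_order g1 k -> asymp_order g2 k.
Proof.
  intros Hg (L & U & HL & HU & B). exists L, U. split; [lra|split; [lra|]].
  intros t Ht. rewrite <- Hg by exact Ht. now apply B.
Qed.

Lemma asymp_order_plus g1 g2 k1 k2 :
  asymp_order g1 k1 -> asymp_order g2 k2 ->
  asymp_order (fun t => g1 t + g2 t) (Z.min k1 k2).
Proof.
  intros (L1 & U1 & HL1 & HU1 & B1) (L2 & U2 & HL2 & HU2 & B2).
  exists (Rmin L1 L2), (U1 + U2).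
  split; [now apply Rmin_glb_lt|split; [lra|]].
  intros t Ht. specialize (B1 t Ht). specialize (B2 t Ht).
  assert (0 < powerRZ t k1) by (apply powerRZ_lt; lra).
  assert (0 < powerRZ t k2) by (apply powerRZ_lt; lra).
  assert (powerRZ t k1 <= powerRZ t (Z.min k1 k2))
    by (apply powerRZ_antitone; lia || lra).
  assert (powerRZ t k2 <= powerRZ t (Z.min k1 k2))
    by (apply powerRZ_antitone; lia || lra).
  pose proof (Rmin_l L1 L2). pose proof (Rmin_r L1 L2).
  destruct (Z.min_spec k1 k2) as [[_ Hmin] | [_ Hmin]]; rewrite Hmin in *;
    split; nra.
Qed.

Lemma asymp_order_mult g1 g2 k1 k2 :
  asymp_order g1 k1 -> asymp_order g2 k2 ->
  asymp_order (fun t => g1 t * g2 t) (k1 + k2).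
Proof.
  intros (L1 & U1 & HL1 & HU1 & B1) (L2 & U2 & HL2 & HU2 & B2).
  exists (L1 * L2), (U1 * U2). split; [nra|split; [nra|]].
  intros t Ht. specialize (B1 t Ht). specialize (B2 t Ht).
  rewrite powerRZ_add by lra.
  assert (0 < L1 * powerRZ t k1) by (pose proof (powerRZ_lt t k1); nra).
  assert (0 < L2 * powerRZ t k2) by (pose proof (powerRZ_lt t k2); nra).
  replace (L1 * L2 * (powerRZ t k1 * powerRZ t k2))
    with (L1 * powerRZ t k1 * (L2 * powerRZ t k2)) by ring.
  replace (U1 * U2 * (powerRZ t k1 * powerRZ t k2))
    with (U1 * powerRZ t k1 * (U2 * powerRZ t k2)) by ring.
  split; apply Rmult_le_compat; lra.
Qed.

Lemma asymp_order_inv g k :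
  asymp_order g k -> asymp_order (fun t => / g t) (- k).
Proof.
  intros (L & U & HL & HU & B).
  exists (/ U), (/ L). split; [now apply Rinv_0_lt_compat|].
  split; [now apply Rinv_0_lt_compat|].
  intros t Ht. specialize (B t Ht). rewrite powerRZ_neg'.
  assert (0 < L * powerRZ t k) by (pose proof (powerRZ_lt t k); nra).
  rewrite <- !Rinv_mult.
  split; apply Rinv_le_contravar; lra.
Qed.

Lemma asymp_order_le g k1 k2 :
  asymp_order g k1 -> asymp_order g k2 -> (k1 <= k2)%Z.
Proof.
  intros (L1 & U1 & HL1 & HU1 & B1) (L2 & U2 & HL2 & HU2 & B2).
  destruct (Z.le_gt_cases k1 k2) as [|Hlt]; [assumption|exfalso].
  (* [L2 t^k2 <= g t <= U1 t^k1 <= U1 t * t^k2] forces [L2 <= U1 t]; take t small. *)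
  set (t := Rmin 1 (L2 / (2 * U1))).
  assert (HL2U1 : 0 < L2 / (2 * U1))
    by (apply Rdiv_lt_0_compat; lra).
  assert (Ht : 0 < t <= 1)
    by (split; [apply Rmin_glb_lt; lra | apply Rmin_l]).
  assert (Ht_small : U1 * t <= L2 / 2).
  { apply Rle_trans with (U1 * (L2 / (2 * U1))).
    - apply Rmult_le_compat_l; [lra | apply Rmin_r].
    - right. field. lra. }
  specialize (B1 t Ht). specialize (B2 t Ht).
  assert (Hp2 : 0 < powerRZ t k2) by (apply powerRZ_lt; lra).
  assert (Hpow : powerRZ t k1 <= t * powerRZ t k2).
  { replace k1 with (k2 + (k1 - k2))%Z by lia.
    rewrite powerRZ_add by lra.
    assert (powerRZ t (k1 - k2) <= powerRZ t 1) by (apply powerRZ_antitone; lia || lra).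
    replace (powerRZ t 1) with t in * by (simpl; ring).
    nra. }
  assert (U1 * powerRZ t k1 <= U1 * t * powerRZ t k2) by nra.
  assert (U1 * t * powerRZ t k2 <= L2 / 2 * powerRZ t k2) by nra.
  nra.
Qed.

Lemma asymp_order_unique g k1 k2 :
  asymp_order g k1 -> asymp_order g k2 -> k1 = k2.
Proof.
  intros H1 H2. apply Z.le_antisymm; eapply asymp_order_le; eassumption.
Qed.

Definition torus_point (t : R) (b : nat -> Z) : nat -> R :=
  fun j => powerRZ t (b j).

Lemma asymp_order_peval m u e b n : wf m u e ->
  asymp_order (fun t => peval e (torus_point t b) (powerRZ t n)) (trop e b n).
Proof.
  induction e as [j| |a|e1 IH1 e2 IH2|e1 IH1 e2 IH2|e1 IH1 e2 IH2];
    simpl; intros Hwf.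
  - apply asymp_order_powerRZ.
  - apply asymp_order_powerRZ.
  - now apply asymp_order_const.
  - apply asymp_order_plus; tauto.
  - apply asymp_order_mult; tauto.
  - apply asymp_order_mult; [|apply asymp_order_inv]; tauto.
Qed.

Lemma trop_eq_of_peval_eq m u1 u2 e1 e2 : wf m u1 e1 -> wf m u2 e2 ->
  (forall x c, pos_pt x -> 0 < c -> peval e1 x c = peval e2 x c) ->
  forall b n, trop e1 b n = trop e2 b n.
Proof.
  intros W1 W2 Heq b n.
  apply (asymp_order_unique (fun t => peval e1 (torus_point t b) (powerRZ t n))).
  - now apply asymp_order_peval with m u1.
  - apply asymp_order_ext with (fun t => peval e2 (torus_point t b) (powerRZ t n)).
    + intros t Ht. symmetry. apply Heq.
      * intro j. apply powerRZ_lt; lra.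
      * apply powerRZ_lt; lra.
    + now apply asymp_order_peval with m u2.
Qed.

(* The outer parameter [c] becomes [1] (tropically [0]), matching how [act]
   and [tact] feed the coordinates into [F]. *)
Fixpoint psubst (e : pexpr) (s : nat -> pexpr) : pexpr :=
  match e with
  | PVar j => s j
  | PC => PConst 1
  | PConst a => PConst a
  | PAdd a b => PAdd (psubst a s) (psubst b s)
  | PMul a b => PMul (psubst a s) (psubst b s)
  | PDiv a b => PDiv (psubst a s) (psubst b s)
  end.

Lemma peval_psubst e s x c :
  peval (psubst e s) x c = peval e (fun j => peval (s j) x c) 1.
Proof. induction e; simpl; try rewrite IHe1, IHe2; reflexivity. Qed.

Lemma trop_psubst e s b n :
  trop (psubst e s) b n = trop e (fun j => trop (s j) b n) 0%Z.
Proof. induction e; simpl; try rewrite IHe1, IHe2; reflexivity. Qed.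

Lemma wf_psubst m u m' u' e s : wf m u e ->
  (forall j, (j < m)%nat -> wf m' u' (s j)) -> wf m' u' (psubst e s).
Proof. induction e; simpl; intros He Hs; auto; tauto || lra. Qed.

Lemma wf_usec m u e : wf m false e -> wf m u e.
Proof. induction e; simpl; intuition congruence. Qed.

Lemma trop_indep_param m e b n n' : wf m false e -> trop e b n = trop e b n'.
Proof. induction e; simpl; intuition (try congruence; f_equal; auto). Qed.

Lemma peval_indep_param m e x c c' : wf m false e -> peval e x c = peval e x c'.
Proof. induction e; simpl; intuition (try congruence; f_equal; auto). Qed.

Section TropicalHalfDecoration.

Variables (r m : nat) (E : nat -> nat -> pexpr) (G Eps : nat -> pexpr).
Variables (F : pexpr) (i : nat).
Hypothesis wf_E : forall j, (j < m)%nat -> wf m true (E i j).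
Hypothesis wf_F : wf m false F.
Hypothesis wf_G : wf m false (G i).
Hypothesis wf_Eps : wf m false (Eps i).

Lemma wf_psubst_F : wf m true (psubst F (E i)).
Proof. now apply wf_psubst with m false. Qed.

Lemma trop_upper_half_decoration :
  upper_half_decoration r m E Eps F -> (i < r)%nat -> forall b n,
  Z.min (trop F (tact E i n b) 0) (trop (Eps i) b 0)
  = Z.min (trop F b 0) (trop (Eps i) b 0 - n).
Proof.
  intros Hup Hi b n.
  assert (Hid : trop (PAdd (psubst F (E i)) (Eps i)) b n
                = trop (PAdd F (PDiv (Eps i) PC)) b n).
  { apply trop_eq_of_peval_eq with m true true.
    - split; [exact wf_psubst_F | now apply wf_usec].
    - repeat split; now apply wf_usec.
    - intros x c Hx Hc. simpl. rewrite peval_psubst.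
      rewrite (peval_indep_param m F x c 1), (peval_indep_param m (Eps i) x c 1)
        by assumption.
      unfold upper_half_decoration, act in Hup. rewrite Hup by assumption.
      field. lra. }
  simpl in Hid. rewrite trop_psubst in Hid.
  rewrite (trop_indep_param m F b n 0), (trop_indep_param m (Eps i) b n 0) in Hid
    by assumption.
  exact Hid.
Qed.

Lemma trop_lower_half_decoration :
  lower_half_decoration r m E G Eps F -> (i < r)%nat -> forall b n,
  Z.min (trop F (tact E i (- n) b) 0) (trop (Eps i) b 0 + trop (G i) b 0)
  = Z.min (trop F b 0) (trop (Eps i) b 0 + trop (G i) b 0 - n).
Proof.
  intros Hlo Hi b n.
  assert (Hid : trop (PAdd (psubst F (E i)) (PMul (Eps i) (G i))) b (- n)
                = trop (PAdd F (PMul PC (PMul (Eps i) (G i)))) b (- n)).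
  { apply trop_eq_of_peval_eq with m true true.
    - split; [exact wf_psubst_F | split; now apply wf_usec].
    - repeat split; now apply wf_usec.
    - intros x c Hx Hc. simpl. rewrite peval_psubst.
      rewrite (peval_indep_param m F x c 1), (peval_indep_param m (Eps i) x c 1),
        (peval_indep_param m (G i) x c 1) by assumption.
      unfold lower_half_decoration, act in Hlo. rewrite Hlo by assumption.
      ring. }
  simpl in Hid. rewrite trop_psubst in Hid.
  rewrite (trop_indep_param m F b (- n) 0), (trop_indep_param m (Eps i) b (- n) 0),
    (trop_indep_param m (G i) b (- n) 0) in Hid by assumption.
  unfold tact. lia.
Qed.

End TropicalHalfDecoration.

Lemma is_maxZ_of_tropical_shift (f0 eps : Z) (h : Z -> Z) : (0 <= f0)%Z ->
  (forall n, Z.min (h n) eps = Z.min f0 (eps - n))%Z ->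
  is_maxZ (fun n => (0 <= n)%Z /\ (0 <= h n)%Z) eps.
Proof.
  intros Hf0 Hshift.
  assert (Heps : (f0 <= eps)%Z) by (specialize (Hshift (eps - f0)%Z); lia).
  split.
  - specialize (Hshift eps). lia.
  - intros n [Hn Hhn]. specialize (Hshift n). lia.
Qed.

Theorem proposition4p7 :
  forall (r : nat) (A : nat -> nat -> Z), simple_cartan r A ->
  forall (m : nat) (E : nat -> nat -> pexpr) (G Eps : nat -> pexpr),
    pos_geom_crystal r A m E G Eps ->
  forall F : pexpr, wf m false F ->
    (upper_half_decoration r m E Eps F ->
       forall i (b : nat -> Z), (i < r)%nat -> inB F b ->
         is_maxZ (fun n => (0 <= n)%Z /\ inB F (tact E i n b)) (trop (Eps i) b 0))
    /\
    (lower_half_decoration r m E G Eps F ->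
       forall i (b : nat -> Z), (i < r)%nat -> inB F b ->
         is_maxZ (fun n => (0 <= n)%Z /\ inB F (tact E i (- n) b))
                 (trop (Eps i) b 0 + trop (G i) b 0)%Z).
Proof.
  intros r A _ m E G Eps Hcrystal F wf_F.
  destruct Hcrystal as (wf_E & wf_G_Eps & _).
  split; intros Hdec i b Hi Hb; destruct (wf_G_Eps i Hi) as [wf_G wf_Eps].
  - apply (is_maxZ_of_tropical_shift (trop F b 0) _
             (fun n => trop F (tact E i n b) 0)); [exact Hb|].
    intro n. apply (trop_upper_half_decoration r m E Eps F i); auto.
  - apply (is_maxZ_of_tropical_shift (trop F b 0) _
             (fun n => trop F (tact E i (- n) b) 0)); [exact Hb|].
    intro n. apply (trop_lower_half_decoration r m E G Eps F i); auto.
Qed.
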